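(* There exists a probability distribution of a random pair $(x,y)\in\mathbb{R}^3\times\mathbb{R}$ with finite second moments, $\Sigma=\mathbb{E}[xx^\top]$ invertible and $\Sigma_{ii}>0$ for all $i$, such that the Naive Bayes weight vector satisfies $w^{\mathrm{NB}}\neq w^*$ and, for every binary feature tree on $\{1,2,3\}$ and every admissible choice of least-squares weights at its nodes, the tree predictor satisfies $w^{\mathrm{tree}}\neq w^*$, where $w^*=\Sigma^{-1}b$ is the least-squares linear predictor.
   Context: Let $(x,y)$ be a random pair with $x=(x_1,\dots,x_n)\in\mathbb{R}^n$, $y\in\mathbb{R}$, finite second moments, $\Sigma:=\mathbb{E}[xx^\top]$ invertible with all $\Sigma_{ii}>0$, and $b:=\mathbb{E}[xy]\in\mathbb{R}^n$. The least-squares linear predictor is $w^*:=\Sigma^{-1}b=\arg\min_{w}\mathbb{E}[(\langle w,x\rangle-y)^2]$. The Naive Bayes weight vector is $w^{\mathrm{NB}}\in\mathbb{R}^n$ with $w^{\mathrm{NB}}_i:=b_i/\Sigma_{ii}$. A feature tree on $\{1,\dots,n\}$ is a finite rooted tree in which every internal node has at least one child and whose leaves are in bijection with $\{1,\dots,n\}$; it is binary if every internal node has at most two children. Each node $v$ computes a prediction $p_v(x)$: the leaf labeled $i$ outputs $p_i(x)=w^{(0)}_i x_i$ with $w^{(0)}_i:=b_i/\Sigma_{ii}$; an internal node $v$ with children $c_1,\dots,c_k$ outputs $p_v(x)=\sum_{j=1}^k u^v_j\,p_{c_j}(x)$, where $u^v\in\mathbb{R}^k$ is any minimizer (an admissible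 choice) of $u\mapsto\mathbb{E}\big[(\sum_{j=1}^k u_j p_{c_j}(x)-y)^2\big]$. By induction every $p_v$ is a linear function of $x$; the tree predictor $w^{\mathrm{tree}}\in\mathbb{R}^n$ is the vector with $p_{\mathrm{root}}(x)=\langle w^{\mathrm{tree}},x\rangle$ for all $x$. *)

From HB Require Import structures.
From mathcomp Require Import all_boot all_order all_algebra.
Set Implicit Arguments. Unset Strict Implicit. Unset Printing Implicit Defensive.
Import Order.TTheory GRing.Theory Num.Theory.
Local Open Scope ring_scope.

(* A finitely supported probability distribution of (x,y) in R^n x R is given by
   m atoms, weights p : 'I_m -> R (nonnegative, summing to 1; imposed in the
   statement), and atom locations X k : 'cV_n, Y k : R. *)
Section Model.
Variables (R : realFieldType) (n m : nat).
Variables (p : 'I_m -> R) (X : 'I_m -> 'cV[R]_n) (Y : 'I_m -> R).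

Definition Expect (F : 'cV[R]_n -> R -> R) : R := \sum_(k < m) p k * F (X k) (Y k).

Definition Sigma : 'M[R]_n := \matrix_(i, j) Expect (fun x _ => x i 0 * x j 0).

Definition bvec : 'cV[R]_n := \col_i Expect (fun x y => x i 0 * y).

Definition wstar : 'cV[R]_n := invmx Sigma *m bvec.

Definition wNB : 'cV[R]_n := \col_i (bvec i 0 / Sigma i i).

Definition lin (w x : 'cV[R]_n) : R := \sum_i w i 0 * x i 0.

End Model.

Inductive btree (n : nat) : Type :=
| BLeaf of 'I_n
| BNode1 of btree n
| BNode2 of btree n & btree n.

Fixpoint leaves n (t : btree n) : seq 'I_n :=
  match t with
  | BLeaf i => [:: i]
  | BNode1 t1 => leaves t1
  | BNode2 t1 t2 => leaves t1 ++ leaves t2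
  end.

Definition is_feature_tree n (t : btree n) : bool := perm_eq (leaves t) (enum 'I_n).

(* tree_pred ... t w : w is the tree predictor of t for SOME admissible choice of
   least-squares weights at the internal nodes. *)
Inductive tree_pred (R : realFieldType) (n m : nat) (p : 'I_m -> R)
    (X : 'I_m -> 'cV[R]_n) (Y : 'I_m -> R) : btree n -> 'cV[R]_n -> Prop :=
| tp_leaf (i : 'I_n) :
    tree_pred p X Y (BLeaf i)
      (\col_j (if j == i then bvec p X Y i 0 / Sigma p X Y i i else 0))
| tp_node1 (t : btree n) (w : 'cV[R]_n) (u : R) :
    tree_pred p X Y t w ->
    (forall v : R,
        Expect p X Y (fun x y => (u * lin w x - y) ^+ 2)
        <= Expect p X Y (fun x y => (v * lin w x - y) ^+ 2)) ->
    tree_pred p X Y (BNode1 t) (u *: w)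
| tp_node2 (t1 t2 : btree n) (w1 w2 : 'cV[R]_n) (u1 u2 : R) :
    tree_pred p X Y t1 w1 -> tree_pred p X Y t2 w2 ->
    (forall v1 v2 : R,
        Expect p X Y (fun x y => (u1 * lin w1 x + u2 * lin w2 x - y) ^+ 2)
        <= Expect p X Y (fun x y => (v1 * lin w1 x + v2 * lin w2 x - y) ^+ 2)) ->
    tree_pred p X Y (BNode2 t1 t2) (u1 *: w1 + u2 *: w2).

From HB Require Import structures.
From mathcomp Require Import all_boot all_order all_algebra.
From mathcomp Require Import ring lra.
Set Implicit Arguments. Unset Strict Implicit. Unset Printing Implicit Defensive.
Import Order.TTheory GRing.Theory Num.Theory.
Local Open Scope ring_scope.

(* Take four equally likely atoms x = e_0, e_1, e_2, (1,1,1) and y = <(3,6,9), x>.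
   Then w* = (3,6,9), while w^NB_0 = 21/2.  Since the atoms span R^3, a
   least-squares predictor over a span of features is unique.  A binary tree on
   three features joins, at some node, a single feature a with a node over the
   other two; unless that pair node gives one of its two features weight 0, it is
   the two-feature least-squares fit [fit_off a], namely (0,7,10), (5,0,11) or
   (6,9,0).  Hence every tree predictor has a zero coordinate or is, off
   coordinate a, a multiple of [fit_off a]; (3,6,9) is neither. *)

Section LinearForm.
Variables (R : realFieldType) (n : nat).
Implicit Types (u v x y : 'cV[R]_n) (a c : R).

Lemma lin_comb a c u v x : lin (a *: u + c *: v) x = a * lin u x + c * lin v x.
Proof.
rewrite /lin !mulr_sumr -big_split /=; apply: eq_bigr => i _; rewrite !mxE; ring.
Qed.

Lemma comb_mxE a c u v l : (a *: u + c *: v) l 0 = a * u l 0 + c * v l 0.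
Proof. by rewrite !mxE. Qed.

Lemma lin_addl u v x : lin (u + v) x = lin u x + lin v x.
Proof. by rewrite -[u]scale1r -[v]scale1r lin_comb !mul1r !scale1r. Qed.

Lemma lin_subr u x y : lin u (x - y) = lin u x - lin u y.
Proof. by rewrite /lin -sumrB; apply: eq_bigr => i _; rewrite !mxE mulrBr. Qed.

Lemma lin0r u : lin u 0 = 0.
Proof. by apply: big1 => i _; rewrite mxE mulr0. Qed.

End LinearForm.

Lemma wsum_sqr_eq0 (R : realFieldType) (m : nat) (p e : 'I_m -> R) :
  (forall k, 0 < p k) -> \sum_k p k * e k ^+ 2 = 0 -> forall k, e k = 0.
Proof.
move=> p_gt0 sum0 k.
have nneg i : true -> 0 <= p i * e i ^+ 2 by rewrite mulr_ge0 ?sqr_ge0 ?ltW.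
have /eqP := psumr_eq0P nneg sum0 (i := k) isT.
by rewrite mulf_eq0 sqrf_eq0 gt_eqF //= => /eqP.
Qed.

Section Moments.
Variables (R : realFieldType) (n m : nat).
Variables (p : 'I_m -> R) (X : 'I_m -> 'cV[R]_n) (Y : 'I_m -> R).
Local Notation E := (Expect p X Y).
Local Notation S := (Sigma p X Y).
Local Notation b := (bvec p X Y).

Definition sq_risk (w : 'cV[R]_n) : R := E (fun x y => (lin w x - y) ^+ 2).

Lemma sq_risk_comb a c (u v : 'cV[R]_n) :
  sq_risk (a *: u + c *: v) = E (fun x y => (a * lin u x + c * lin v x - y) ^+ 2).
Proof. by rewrite /sq_risk /Expect; apply: eq_bigr => k _; rewrite lin_comb. Qed.

Lemma Sigma_tr : S^T = S.
Proof.
apply/matrixP => i j; rewrite !mxE /Expect.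
by apply: eq_bigr => k _; rewrite (mulrC (X k j 0)).
Qed.

Lemma Sigma_mulmx_lin (v : 'cV[R]_n) i : (S *m v) i 0 = E (fun x _ => x i 0 * lin v x).
Proof.
rewrite mxE; under eq_bigr do rewrite mxE /Expect mulr_suml.
rewrite exchange_big /=; apply: eq_bigr => k _.
rewrite /lin !mulr_sumr; apply: eq_bigr => j _; ring.
Qed.

Lemma lin_Sigma (u v : 'cV[R]_n) : lin u (S *m v) = E (fun x _ => lin u x * lin v x).
Proof.
rewrite {1}/lin; under eq_bigr do rewrite Sigma_mulmx_lin /Expect mulr_sumr.
rewrite exchange_big /=; apply: eq_bigr => k _.
rewrite [lin u _]/lin mulr_suml mulr_sumr; apply: eq_bigr => i _; ring.
Qed.

Lemma lin_bvec (u : 'cV[R]_n) : lin u b = E (fun x y => lin u x * y).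
Proof.
rewrite {1}/lin; under eq_bigr do rewrite mxE /Expect mulr_sumr.
rewrite exchange_big /=; apply: eq_bigr => k _.
rewrite [lin u _]/lin mulr_suml mulr_sumr; apply: eq_bigr => i _; ring.
Qed.

Lemma Sigma_mulmx_exact (v : 'cV[R]_n) :
  (forall k, lin v (X k) = Y k) -> S *m v = b.
Proof.
move=> v_exact; apply/matrixP => i j; rewrite (ord1 j) Sigma_mulmx_lin !mxE.
by apply: eq_bigr => k _; rewrite v_exact.
Qed.

Lemma sq_risk_decomp (v d : 'cV[R]_n) :
  sq_risk v = sq_risk d + lin (v - d) (S *m d - b) *+ 2
              + E (fun x _ => lin (v - d) x ^+ 2).
Proof.
rewrite lin_subr lin_Sigma lin_bvec /sq_risk /Expect -sumrB -sumrMnl -!big_split /=.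
apply: eq_bigr => k _.
have -> : lin v (X k) = lin d (X k) + lin (v - d) (X k) by rewrite -lin_addl addrC subrK.
ring.
Qed.

Section PositiveWeights.
Hypothesis p_gt0 : forall k, 0 < p k.
Hypothesis X_span : forall u : 'cV[R]_n, (forall k, lin u (X k) = 0) -> u = 0.

Lemma sq_risk_min_eq (v d : 'cV[R]_n) :
  lin (v - d) (S *m d - b) = 0 -> sq_risk v <= sq_risk d -> v = d.
Proof.
move=> normal; rewrite (sq_risk_decomp v d) normal mul0rn addr0 gerDl => risk_le.
apply/eqP; rewrite -subr_eq0; apply/eqP/X_span.
apply: (wsum_sqr_eq0 (e := fun k => lin (v - d) (X k)) p_gt0).
apply/eqP; rewrite eq_le risk_le sumr_ge0 // => k _.
by rewrite mulr_ge0 ?sqr_ge0 ?ltW.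
Qed.

Lemma Sigma_mulmx_eq0 (u : 'cV[R]_n) : S *m u = 0 -> u = 0.
Proof.
move=> Su0; apply: X_span; apply: (wsum_sqr_eq0 (e := fun k => lin u (X k)) p_gt0).
by rewrite -[LHS]/(E (fun x _ => lin u x ^+ 2)) -lin_Sigma Su0 lin0r.
Qed.

Lemma Sigma_unitmx : S \in unitmx.
Proof.
rewrite unitmxE unitfE; apply/negP => /det0P [r r_neq0 rS0].
have : S *m r^T = 0 by rewrite -[S]Sigma_tr -trmx_mul rS0 trmx0.
by move/Sigma_mulmx_eq0/(congr1 trmx); rewrite trmxK trmx0; apply/eqP.
Qed.

Lemma wstar_exact (v : 'cV[R]_n) : (forall k, lin v (X k) = Y k) -> wstar p X Y = v.
Proof.
by move=> v_exact; rewrite /wstar -(Sigma_mulmx_exact v_exact) mulKmx // Sigma_unitmx.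
Qed.

End PositiveWeights.
End Moments.

Section Example.
Variable R : realFieldType.

Definition ex_p : 'I_4 -> R := fun _ => 4^-1.

Definition ex_X (k : 'I_4) : 'cV[R]_3 := \col_j ((k == 3 :> nat) || (k == j :> nat))%:R.

Definition ex_w : 'cV[R]_3 := \col_j (3 * j.+1)%:R.

Definition ex_Y (k : 'I_4) : R := lin ex_w (ex_X k).

(* The least-squares predictor from the two features other than [a]. *)
Definition fit_off (a : 'I_3) : 'cV[R]_3 := \col_i ((i != a) * (3 * i + a + 4))%:R.

Local Notation S := (Sigma ex_p ex_X ex_Y).
Local Notation b := (bvec ex_p ex_X ex_Y).

Lemma ex_p_gt0 k : 0 < ex_p k.
Proof. by rewrite invr_gt0 ltr0n. Qed.

Lemma ex_p_sum : \sum_(k < 4) ex_p k = 1.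
Proof. by rewrite sumr_const card_ord -[_ *+ 4]mulr_natr mulVf // pnatr_eq0. Qed.

Lemma lin_ex_X (u : 'cV[R]_3) (i : 'I_3) : lin u (ex_X (widen_ord (leqnSn 3) i)) = u i 0.
Proof.
rewrite /lin (bigD1 i) //= big1 ?addr0 => [|j ji]; rewrite mxE /= ltn_eqF //=.
  by rewrite eqxx mulr1.
by rewrite (inj_eq val_inj) eq_sym (negbTE ji) mulr0.
Qed.

Lemma ex_span (u : 'cV[R]_3) : (forall k, lin u (ex_X k) = 0) -> u = 0.
Proof.
by move=> u0; apply/matrixP => i c; rewrite (ord1 c) mxE -lin_ex_X u0.
Qed.

Lemma ex_SigmaE i j : S i j = 4^-1 * (1 + (i == j))%:R.
Proof.
rewrite mxE /Expect -mulr_sumr; congr (_ * _).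
under eq_bigr do rewrite !mxE -natrM; rewrite -natr_sum; congr (_%:R).
by rewrite !big_ord_recr big_ord0 /=; case: i j => [[|[|[|?]]] ?] [[|[|[|?]]] ?].
Qed.

Lemma ex_Sigma_mulmxE (v : 'cV[R]_3) l : (S *m v) l 0 = 4^-1 * (\sum_j v j 0 + v l 0).
Proof.
rewrite mxE; under eq_bigr do rewrite ex_SigmaE -mulrA.
rewrite -mulr_sumr; congr (_ * _).
under eq_bigr do rewrite natrD mulrDl mul1r.
rewrite big_split /=; congr (_ + _).
rewrite (bigD1 l) //= eqxx mul1r big1 ?addr0 // => j lj.
by rewrite eq_sym (negbTE lj) mul0r.
Qed.

Lemma ex_Sigma_diag_gt0 i : 0 < S i i.
Proof. by rewrite ex_SigmaE eqxx mulr_gt0 ?invr_gt0 ?ltr0n. Qed.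

Lemma ex_Sigma_unitmx : S \in unitmx.
Proof. exact: Sigma_unitmx ex_Y ex_p_gt0 ex_span. Qed.

Lemma ex_bvec : b = S *m ex_w.
Proof. by rewrite (Sigma_mulmx_exact ex_p (v := ex_w) (fun k => erefl)). Qed.

Lemma ex_wstar : wstar ex_p ex_X ex_Y = ex_w.
Proof. exact: (wstar_exact ex_p_gt0 ex_span (v := ex_w) (fun k => erefl)). Qed.

Lemma ex_wNB_neq : wNB ex_p ex_X ex_Y <> ex_w.
Proof.
move/matrixP/(_ 0 0); rewrite [LHS]mxE => /(congr1 (fun z => z * S 0 0)).
rewrite divfK ?gt_eqF ?ex_Sigma_diag_gt0 // ex_bvec ex_Sigma_mulmxE ex_SigmaE.
rewrite !big_ord_recr big_ord0 !mxE /= add0r !natrD !natrM.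
lra.
Qed.

Lemma fit_off_normal a l : l != a -> (S *m fit_off a) l 0 = b l 0.
Proof.
move=> la; rewrite ex_bvec !ex_Sigma_mulmxE; congr (_ * _).
rewrite !mxE; under eq_bigr do rewrite mxE; under [in RHS]eq_bigr do rewrite mxE.
rewrite -!natr_sum -!natrD; congr (_%:R).
rewrite !big_ord_recr !big_ord0 /=.
by move: la; case: a l => [[|[|[|?]]] ?] [[|[|[|?]]] ?].
Qed.

Lemma fit_off_diag a : fit_off a a 0 = 0.
Proof. by rewrite mxE eqxx. Qed.

Definition supported_at (i : 'I_3) (w : 'cV[R]_3) : Prop := forall j, j != i -> w j 0 = 0.

Definition degenerate (w : 'cV[R]_3) : Prop :=
  (exists i, w i 0 = 0) \/ exists a s, forall l, l != a -> w l 0 = s * fit_off a l 0.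

Definition tree_inv (L : seq 'I_3) (w : 'cV[R]_3) : Prop :=
  match L with
  | [:: i] => supported_at i w
  | [:: i; j] => forall k, k != i -> k != j ->
      w k 0 = 0 /\ (w i 0 = 0 \/ w j 0 = 0 \/ exists s, w = s *: fit_off k)
  | [:: _; _; _] => degenerate w
  | _ => True
  end.

Lemma ord3_other (i j k l : 'I_3) :
  i != j -> k != i -> k != j -> l != k -> (l == i) || (l == j).
Proof. by case: i j k l => [[|[|[|?]]] ?] [[|[|[|?]]] ?] [[|[|[|?]]] ?] [[|[|[|?]]] ?]. Qed.

Lemma tree_inv_scale L u w : tree_inv L w -> tree_inv L (u *: w).
Proof.
case: L => [|i [|j [|k [|? ?]]]] //=.
- by move=> w_at l li; rewrite mxE w_at ?mulr0.
- move=> w_pair k ki kj; have [wk w_cases] := w_pair k ki kj.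
  rewrite !mxE wk mulr0; split=> //.
  case: w_cases => [->|[->|[s ->]]].
  + by left; rewrite mulr0.
  + by right; left; rewrite mulr0.
  + by right; right; exists (u * s); rewrite scalerA.
- case=> [[l wl]|[a [s w_fit]]]; first by left; exists l; rewrite mxE wl mulr0.
  by right; exists a, (u * s) => l la; rewrite mxE w_fit // mulrA.
Qed.

Lemma pair_node_inv (i j : 'I_3) (w1 w2 : 'cV[R]_3) (u1 u2 : R) :
  i != j -> supported_at i w1 -> supported_at j w2 ->
  (forall v1 v2 : R,
      Expect ex_p ex_X ex_Y (fun x y => (u1 * lin w1 x + u2 * lin w2 x - y) ^+ 2)
      <= Expect ex_p ex_X ex_Y (fun x y => (v1 * lin w1 x + v2 * lin w2 x - y) ^+ 2)) ->
  tree_inv [:: i; j] (u1 *: w1 + u2 *: w2).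
Proof.
move=> ij w1_at w2_at opt k ki kj; have ji : j != i by rewrite eq_sym.
have wk : (u1 *: w1 + u2 *: w2) k 0 = 0.
  by rewrite comb_mxE (w1_at k ki) (w2_at k kj) !mulr0 addr0.
split=> //; set w := u1 *: w1 + u2 *: w2.
have [|wi] := eqVneq (w i 0) 0; first by left.
have [|wj] := eqVneq (w j 0) 0; first by right; left.
right; right; exists 1; rewrite scale1r.
have w1i : w1 i 0 != 0.
  by apply: contraNneq wi; rewrite comb_mxE (w2_at i ij) => ->; rewrite !mulr0 addr0.
have w2j : w2 j 0 != 0.
  by apply: contraNneq wj; rewrite comb_mxE (w1_at j ji) => ->; rewrite !mulr0 addr0.
have fitE : fit_off k = (fit_off k i 0 / w1 i 0) *: w1 + (fit_off k j 0 / w2 j 0) *: w2.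
  apply/matrixP => l c; rewrite (ord1 c) comb_mxE.
  have [->|lk] := eqVneq l k.
    by rewrite fit_off_diag (w1_at k ki) (w2_at k kj) !mulr0 addr0.
  case/orP: (ord3_other ij ki kj lk) => /eqP ->.
    by rewrite (w2_at i ij) mulr0 addr0 divfK.
  by rewrite (w1_at j ji) mulr0 add0r divfK.
(* [fit_off k] lies in the span of [w1] and [w2] and satisfies the normal
   equations there, so it is the unique optimum. *)
apply: (sq_risk_min_eq ex_p_gt0 ex_span); last by rewrite /w fitE !sq_risk_comb.
have subE (A B : 'cV[R]_3) l : (A - B) l 0 = A l 0 - B l 0 by rewrite !mxE.
apply: big1 => l _; have [->|lk] := eqVneq l k.
  by rewrite subE wk fit_off_diag subr0 mul0r.
by rewrite [X in _ * X]subE fit_off_normal // subrr mulr0.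
Qed.

Lemma single_pair_node_inv (a i j : 'I_3) (w1 w2 : 'cV[R]_3) (u1 u2 : R) :
  a != i -> a != j -> supported_at a w1 -> tree_inv [:: i; j] w2 ->
  degenerate (u1 *: w1 + u2 *: w2).
Proof.
move=> ai aj w1_at w2_pair; have [_ w2_cases] := w2_pair a ai aj.
have ia : i != a by rewrite eq_sym.
have ja : j != a by rewrite eq_sym.
case: w2_cases => [w2i|[w2j|[s ->]]].
- by left; exists i; rewrite comb_mxE (w1_at i ia) w2i !mulr0 addr0.
- by left; exists j; rewrite comb_mxE (w1_at j ja) w2j !mulr0 addr0.
- right; exists a, (u2 * s) => l la.
  by rewrite comb_mxE (w1_at l la) mxE mulr0 add0r mulrA.
Qed.

Lemma size_leaves_gt0 n (t : btree n) : (0 < size (leaves t))%N.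
Proof. by elim: t => //= t1 IH1 t2 _; rewrite size_cat addn_gt0 IH1. Qed.

Lemma tree_pred_inv t w :
  tree_pred ex_p ex_X ex_Y t w -> uniq (leaves t) -> tree_inv (leaves t) w.
Proof.
elim=> [i | t0 w0 u _ IH _ | t1 t2 w1 w2 u1 u2 _ IH1 _ IH2 opt] /=.
- by move=> _ j ji; rewrite mxE (negbTE ji).
- by move/IH; apply: tree_inv_scale.
rewrite cat_uniq => /and3P [uniq1 disj uniq2].
move: (IH1 uniq1) (IH2 uniq2) disj (size_leaves_gt0 t1) (size_leaves_gt0 t2).
case: (leaves t1) => [|i [|i' [|i'' l1]]]; case: (leaves t2) => [|j [|j' [|j'' l2]]] //=;
  try by case: l1.
- move=> w1_at w2_at; rewrite inE orbF => ji _ _.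
  by apply: (pair_node_inv _ w1_at w2_at opt); rewrite eq_sym.
- move=> w1_at w2_pair; rewrite !inE orbF negb_or => /andP [ji j'i] _ _.
  apply: (single_pair_node_inv (i := j) (j := j') u1 u2 _ _ w1_at w2_pair);
  by rewrite eq_sym.
- move=> w1_pair w2_at; rewrite !inE orbF negb_or => /andP [ij i'j] _ _.
  rewrite addrC.
  exact: (single_pair_node_inv (i := i) (j := i') u2 u1 _ _ w2_at w1_pair).
Qed.

Lemma feature_tree_degenerate t w :
  is_feature_tree t -> tree_pred ex_p ex_X ex_Y t w -> degenerate w.
Proof.
move=> ft /tree_pred_inv; rewrite (perm_uniq ft) enum_uniq => /(_ isT).
have : size (leaves t) = 3%N by rewrite (perm_size ft) size_enum_ord.
by case: (leaves t) => [|? [|? [|? [|? ?]]]].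
Qed.

Lemma ex_w_nondegenerate : ~ degenerate ex_w.
Proof.
case=> [[i]|[a [s w_fit]]]; first by rewrite mxE => /eqP; rewrite pnatr_eq0.
have cross l l' :
    l != a -> l' != a -> ex_w l 0 * fit_off a l' 0 = ex_w l' 0 * fit_off a l 0.
  by move=> la l'a; rewrite !w_fit // mulrAC.
(* In Z/3, [a + 1] and [a + 2] are the two indices other than [a]. *)
have /eqP : ex_w (a + 1) 0 * fit_off a (a + 2) 0 = ex_w (a + 2) 0 * fit_off a (a + 1) 0.
  by apply: cross; case: a {w_fit} => [[|[|[|?]]] ?].
by rewrite !mxE -!natrM eqr_nat; case: a {w_fit cross} => [[|[|[|?]]] ?].
Qed.

End Example.

Theorem proposition2 (R : realFieldType) :
  exists (m : nat) (p : 'I_m -> R) (X : 'I_m -> 'cV[R]_3) (Y : 'I_m -> R),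
    [/\ (forall k, 0 <= p k), \sum_(k < m) p k = 1,
        Sigma p X Y \in unitmx, (forall i, 0 < Sigma p X Y i i) &
        wNB p X Y <> wstar p X Y /\
        (forall (t : btree 3), is_feature_tree t ->
           forall w : 'cV[R]_3, tree_pred p X Y t w -> w <> wstar p X Y)].
Proof.
exists 4%N, (@ex_p R), (@ex_X R), (@ex_Y R); split.
- by move=> k; apply/ltW/ex_p_gt0.
- exact: ex_p_sum.
- exact: ex_Sigma_unitmx.
- exact: ex_Sigma_diag_gt0.
rewrite ex_wstar; split; first exact: ex_wNB_neq.
move=> t ft w tw w_eq; apply: (@ex_w_nondegenerate R).
by rewrite -w_eq; apply: feature_tree_degenerate tw.
Qed.
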